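(* Let $N\ge 2$ and $K\ge 2$ be integers, let $M=N^K$, and define costs $d_m=N-1$ for $m\in[1:N]$ and $d_m=N$ for $m\in[N+1:N^K]$. Let $C=\left(1+\frac1N+\frac1{N^2}+\cdots+\frac1{N^{K-1}}\right)^{-1}$ and fix $D$ with $1\le D\le 1/C$. Let $\mathcal{F}_D$ be the set of probability vectors $P=(p_1,\dots,p_{N^K})$ (i.e. $p_m\ge 0$, $\sum_m p_m=1$) satisfying $\frac{1}{N-1}\sum_{m=1}^{N^K}p_m d_m=D$. Let $U$ be the uniform distribution on $[1:N^K]$. (i) For every order $0<\alpha<\infty$ (including $\alpha=1$), the problem of minimizing $D_\alpha(P\,\|\,U)$ over $P\in\mathcal{F}_D$ has the unique minimizer $$p_m=\begin{cases}\dfrac{1-(N-1)(D-1)}{N}, & m\in[1:N],\\[2mm] \dfrac{(N-1)(D-1)}{N^K-N}, & m\in[N+1:N^K].\end{cases}$$ (ii) For $\alpha=\infty$, a distribution $P\in\mathcal{F}_D$ minimizes $D_\infty(P\,\|\,U)$ over $\mathcal{F}_D$ if and only if $p_m=\frac{1-(N-1)(D-1)}{N}$ for all $m\in[1:N]$, and $(p_m)_{m\in[N+1:N^K]}$ is any nonnegative vector with $\sum_{m=N+1}^{N^K}p_m=(N-1)(D-1)$ and $p_m\le \frac{1-(N-1)(D-1)}{N}$ for each $m\in[N+1:N^K]$.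
   Context: Notation: $[i:j]=\{i,i+1,\dots,j\}$. For probability vectors $P=(p_1,\dots,p_M)$, $U=(u_1,\dots,u_M)$ with $u_m>0$, the Rényi divergence of order $\alpha$ (natural logarithm) is $D_\alpha(P\|U)=\frac{1}{\alpha-1}\log\sum_{m=1}^M p_m^\alpha u_m^{1-\alpha}$ for $0<\alpha<\infty$, $\alpha\neq1$; for $\alpha=1$ it is the Kullback–Leibler divergence $D_1(P\|U)=\sum_m p_m\log\frac{p_m}{u_m}$ (with $0\log 0=0$); and $D_\infty(P\|U)=\log\max_m \frac{p_m}{u_m}$. (Interpretation: the $N^K$ query options of the symmetric Tian–Sun–Chen PIR scheme with $N$ databases, $K$ messages and message length $N-1$, where the first $N$ options have download cost $N-1$ and the rest cost $N$; $D$ is the expected download cost normalized by the message length $N-1$.) *)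

(* R : realType, powR (0 `^ a = 0 for a > 0), ln natural log. *)
From HB Require Import structures.
From mathcomp Require Import all_boot all_order all_algebra.
From mathcomp Require Import all_classical all_reals all_analysis.
Import Order.TTheory GRing.Theory Num.Theory.
Local Open Scope ring_scope.

Definition renyi {R : realType} {M : nat} (alpha : R) (P U : 'I_M -> R) : R :=
  if alpha == 1 then
    \sum_(m < M) (if P m == 0 then 0 else P m * ln (P m / U m))
  else (alpha - 1)^-1 * ln (\sum_(m < M) (P m `^ alpha) * (U m `^ (1 - alpha))).

Definition renyi_inf {R : realType} {M : nat} (P U : 'I_M -> R) : R :=
  ln (\big[Num.max/0]_(m < M) (P m / U m)).

(* uniform distribution on [1:N^K] (index m+1 <-> ordinal m) *)
Definition unif (R : realType) (N K : nat) : 'I_(N ^ K) -> R :=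
  fun _ => ((N ^ K)%:R)^-1.

Definition cost (R : realType) (N K : nat) (m : 'I_(N ^ K)) : R :=
  if (m < N)%N then (N%:R - 1) else N%:R.

Definition Cconst (R : realType) (N K : nat) : R :=
  (\sum_(k < K) (N%:R ^- k))^-1.

Definition feasible {R : realType} (N K : nat) (D : R) (P : 'I_(N ^ K) -> R) : Prop :=
  (forall m, 0 <= P m) /\ \sum_(m < N ^ K) P m = 1 /\
  (N%:R - 1)^-1 * \sum_(m < N ^ K) P m * cost R N K m = D.

Definition is_minimizer {R : realType} (N K : nat) (D : R)
  (f : ('I_(N ^ K) -> R) -> R) (P : 'I_(N ^ K) -> R) : Prop :=
  feasible N K D P /\ forall Q, feasible N K D Q -> f P <= f Q.

Definition pstar {R : realType} (N K : nat) (D : R) (m : 'I_(N ^ K)) : R :=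
  if (m < N)%N then (1 - (N%:R - 1) * (D - 1)) / N%:R
  else (N%:R - 1) * (D - 1) / ((N ^ K)%:R - N%:R).

From HB Require Import structures.
From mathcomp Require Import all_boot all_order all_algebra.
From mathcomp Require Import all_classical all_reals all_analysis.
From mathcomp Require Import ring lra.
Import Order.TTheory GRing.Theory Num.Theory.
Local Open Scope ring_scope.

(* Split the N^K query options into the N "cheap" ones (cost N - 1) and the
   "expensive" ones (cost N).  A probability vector is feasible exactly when
   it is nonnegative, the cheap block has mass 1 - (N-1)(D-1) and the other
   block has mass (N-1)(D-1) ([feasibleE]); [pstar] spreads each block
   uniformly, with values [pcheap >= pdear >= 0], the inequality
   [pcheap >= N^-K] being the constraint D <= 1/C ([pcheap_ge_unif]).

   (i) For finite order a, the divergence is an increasing function of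
   [sum_m phi (p_m)] with phi(x) = x ln (x / u) (a = 1) or x^a / (a - 1)
   (a <> 1).  These phi have strict supporting lines at every positive point,
   so Jensen's inequality on each block ([block_jensen]) makes [pstar] the
   unique minimizer.
   (ii) For a = oo, some cheap option has mass at least the block mean
   [pcheap], so the divergence is at least ln (pcheap N^K), with equality
   exactly when no option exceeds [pcheap]; on the cheap block this forces
   equality with [pcheap] ([block_eq_mean_of_le]). *)

Definition strict_support {R : realType} (phi : R -> R) (c : R) : Prop :=
  exists k, forall y, 0 <= y -> y != c -> phi c + k * (y - c) < phi y.

Section StrictSupportLines.
Context {R : realType}.

Lemma ln_lt_subr1 (y : R) : 0 < y -> y != 1 -> ln y < y - 1.
Proof.
move=> y_gt0 y_neq1.
have ln_neq0 : ln y != 0 by rewrite ln_eq0.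
by have := expR_gt1Dx ln_neq0; rewrite lnK ?posrE //; lra.
Qed.

(* Strict concavity of [z `^ a] for [0 < a < 1] (weighted AM-GM): the graph
   lies strictly below its tangent at [z = 1].  Writing [z = expR l] and
   [t = a * l], this follows from [1 + x < expR x] at [x = l - t] and [x = -t]. *)
Lemma powR_lt_tangent (a z : R) : 0 < a -> a < 1 -> 0 <= z -> z != 1 ->
  z `^ a < 1 + a * (z - 1).
Proof.
move=> a_gt0 a_lt1 z_ge0 z_neq1.
have [->|z_neq0] := eqVneq z 0; first by rewrite powR0 ?gt_eqF //; lra.
have z_gt0 : 0 < z by rewrite lt_def z_neq0.
have l_neq0 : ln z != 0 by rewrite ln_eq0.
rewrite /powR gt_eqF //.
set l := ln z; set t := a * l.
have ez : z = expR t * expR (l - t) by rewrite -expRD addrC subrK lnK ?posrE.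
have e1 : 1 = expR t * expR (- t) by rewrite -expRD subrr expR0.
have lt1 : 1 + (l - t) < expR (l - t).
  apply: expR_gt1Dx; rewrite /t -{1}[l]mul1r -mulrBl mulf_neq0 //.
  by rewrite subr_eq0 eq_sym lt_eqF.
have lt2 : 1 + - t < expR (- t).
  by apply: expR_gt1Dx; rewrite oppr_eq0 mulf_neq0 // gt_eqF.
have et_gt0 := expR_gt0 t.
have k1 : a * expR t * (1 + (l - t)) < a * expR t * expR (l - t).
  by rewrite ltr_pM2l // mulr_gt0.
have k2 : (1 - a) * expR t * (1 - t) < (1 - a) * expR t * expR (- t).
  by rewrite ltr_pM2l // mulr_gt0 // subr_gt0.
have e2 : a * expR t * expR (l - t) = a * z by rewrite -mulrA -ez.
have e3 : (1 - a) * expR t * expR (- t) = 1 - a by rewrite -mulrA -e1 mulr1.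
have k3 : a * expR t * (1 + (l - t)) + (1 - a) * expR t * (1 - t) = expR t.
  by rewrite /t; ring.
lra.
Qed.

(* Strict convexity of [z `^ a] for [1 < a] (Bernoulli's inequality),
   obtained from the concave case with exponent [a^-1] applied to [z `^ a]. *)
Lemma powR_gt_tangent (a z : R) : 1 < a -> 0 <= z -> z != 1 ->
  1 + a * (z - 1) < z `^ a.
Proof.
move=> a_gt1 z_ge0 z_neq1.
have a_gt0 : 0 < a by lra.
have w_ge0 : 0 <= z `^ a := powR_ge0 z a.
have wK : (z `^ a) `^ a^-1 = z by rewrite -powRrM mulfV ?gt_eqF // powRr1.
have w_neq1 : z `^ a != 1.
  by apply: contra z_neq1 => /eqP w1; rewrite -wK w1 powR1.
have ai_gt0 : 0 < a^-1 by rewrite invr_gt0.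
have ai_lt1 : a^-1 < 1 by rewrite invf_lt1.
have := powR_lt_tangent _ _ ai_gt0 ai_lt1 w_ge0 w_neq1; rewrite wK => lt.
have : a * z < a * (1 + a^-1 * (z `^ a - 1)) by rewrite ltr_pM2l.
by rewrite mulrDr mulrA mulfV ?gt_eqF //; lra.
Qed.

(* Both cases at once: [x `^ a / (a - 1)] is strictly convex for [a != 1];
   its supporting line at [c] is the tangent inequality at 1, rescaled by [c]. *)
Lemma support_powR (a c : R) : 0 < a -> a != 1 -> 0 < c ->
  strict_support (fun x => x `^ a / (a - 1)) c.
Proof.
move=> a_gt0 a_neq1 c_gt0.
have ca_gt0 : 0 < c `^ a := powR_gt0 a c_gt0.
exists (a * c `^ a / c / (a - 1)) => y y_ge0 y_neq_c.
have yE : y = c * (y / c) by rewrite mulrC divfK ?gt_eqF.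
have z_ge0 : 0 <= y / c by rewrite divr_ge0 // ltW.
have z_neq1 : y / c != 1.
  by apply: contra y_neq_c => /eqP z1; rewrite yE z1 mulr1.
rewrite [in y `^ a]yE powRM ?(ltW c_gt0) //.
set z := y / c in yE z_ge0 z_neq1 *.
rewrite yE.
have -> : c `^ a / (a - 1) + a * c `^ a / c / (a - 1) * (c * z - c)
    = c `^ a * (1 + a * (z - 1)) / (a - 1).
  by field; rewrite subr_eq0 a_neq1 gt_eqF.
have [a_lt1|a_gt1|a_eq1] := ltgtP a 1; last by rewrite a_eq1 eqxx in a_neq1.
- rewrite ltr_nM2r ?invr_lt0 ?subr_lt0 // ltr_pM2l //.
  exact: powR_lt_tangent.
- rewrite ltr_pM2r ?invr_gt0 ?subr_gt0 // ltr_pM2l //.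
  exact: powR_gt_tangent.
Qed.

Lemma support_xlnx (u c : R) : 0 < u -> 0 < c ->
  strict_support (fun x => if x == 0 then 0 else x * ln (x / u)) c.
Proof.
move=> u_gt0 c_gt0; exists (ln (c / u) + 1) => y y_ge0 y_neq_c.
rewrite (gt_eqF c_gt0).
have [->|y_neq0] := eqVneq y 0; first by nra.
have y_gt0 : 0 < y by rewrite lt_def y_neq0.
have lnE : ln (y / u) = ln (c / u) - ln (c / y).
  rewrite -lnV ?posrE ?divr_gt0 // invf_div -lnM ?posrE ?divr_gt0 //.
  by congr ln; field; rewrite !gt_eqF.
have cy_neq1 : c / y != 1.
  by apply: contra y_neq_c => /eqP cy1; rewrite -[c](divfK y_neq0) cy1 mul1r.
have : y * ln (c / y) < y * (c / y - 1).
  by rewrite ltr_pM2l // ln_lt_subr1 ?divr_gt0.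
rewrite mulrBr mulrCA divff // mulr1 lnE.
nra.
Qed.

End StrictSupportLines.

Section BlockAverages.
Context {R : realType} {n : nat} {A : pred 'I_n} {x : 'I_n -> R} {c : R}.

Lemma block_exists_ge_mean : (exists m, A m) ->
  \sum_(m < n | A m) (x m - c) = 0 -> exists2 m, A m & c <= x m.
Proof.
move=> [j Aj] mean_c.
case: (boolP [exists m, A m && (c <= x m)]) => [/existsP[m /andP[Am le]]|].
  by exists m.
move=> /existsPn none.
have lt_c m : A m -> x m < c by move=> Am; move: (none m); rewrite Am -ltNge.
have : 0 < \sum_(m < n | A m) (c - x m).
  rewrite (bigD1 j) //= ltr_pwDl ?subr_gt0 ?lt_c //.
  by apply: sumr_ge0 => m /andP[Am _]; rewrite subr_ge0 ltW ?lt_c.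
by under eq_bigr => m _ do rewrite -opprB; rewrite sumrN mean_c oppr0 ltxx.
Qed.

Lemma block_eq_mean_of_le : (forall m, A m -> x m <= c) ->
  \sum_(m < n | A m) (x m - c) = 0 -> forall m, A m -> x m = c.
Proof.
move=> le_c mean_c m Am; apply/eqP; rewrite -subr_eq0 -oppr_eq0 opprB.
apply/eqP; apply: (@psumr_eq0P _ _ A (fun i => c - x i) _ _ m Am) => [i Ai|].
  by rewrite subr_ge0 le_c.
by under eq_bigr => i _ do rewrite -opprB; rewrite sumrN mean_c oppr0.
Qed.

Lemma block_jensen (phi : R -> R) : 0 <= c -> (forall m, A m -> 0 <= x m) ->
  \sum_(m < n | A m) (x m - c) = 0 -> (0 < c -> strict_support phi c) ->
  \sum_(m < n | A m) phi c <= \sum_(m < n | A m) phi (x m) /\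
  ((exists2 m, A m & x m != c) ->
     \sum_(m < n | A m) phi c < \sum_(m < n | A m) phi (x m)).
Proof.
move=> c_ge0 x_ge0 mean_c support.
have [c0|c_neq0] := eqVneq c 0.
  have x0 m : A m -> x m = c.
    move=> Am; rewrite c0; apply: (@psumr_eq0P _ _ A x _ _ m Am) => [i Ai|].
      by rewrite x_ge0.
    by rewrite -[RHS]mean_c; apply: eq_bigr => i _; rewrite c0 subr0.
  have -> : \sum_(m < n | A m) phi (x m) = \sum_(m < n | A m) phi c.
    by apply: eq_bigr => m Am; rewrite x0.
  by split=> // -[m Am]; rewrite x0 ?eqxx.
have [k above] : strict_support phi c by apply: support; rewrite lt_def c_neq0.
have le_phi m : A m -> phi c + k * (x m - c) <= phi (x m).
  move=> Am; have [->|x_neq_c] := eqVneq (x m) c.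
    by rewrite subrr mulr0 addr0.
  by rewrite ltW // above // x_ge0.
have tangent_sum : \sum_(m < n | A m) (phi c + k * (x m - c)) =
    \sum_(m < n | A m) phi c.
  by rewrite big_split /= -mulr_sumr mean_c mulr0 addr0.
rewrite -tangent_sum; split; first exact: ler_sum.
move=> [j Aj x_neq_c]; rewrite (bigD1 j) //= [X in _ < X](bigD1 j) //=.
rewrite ltr_leD ?above ?x_ge0 //.
by apply: ler_sum => m /andP[Am _]; apply: le_phi.
Qed.

End BlockAverages.

Lemma sum_const_ltn {R : realType} (n k : nat) (c : R) : (k <= n)%N ->
  \sum_(m < n | (m < k)%N) c = k%:R * c.
Proof.
move=> le_kn.
by rewrite -(big_ord_widen n (fun=> c) le_kn) sumr_const card_ord mulr_natl.
Qed.

Lemma sum_const_geq {R : realType} (n k : nat) (c : R) : (k <= n)%N ->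
  \sum_(m < n | ~~ (m < k)%N) c = (n%:R - k%:R) * c.
Proof.
move=> le_kn.
have total : \sum_(m < n) c = n%:R * c by rewrite sumr_const card_ord mulr_natl.
rewrite (bigID (fun m : 'I_n => (m < k)%N)) /= sum_const_ltn // in total.
by rewrite mulrBl -total addrAC subrr add0r.
Qed.

(* For [b t1, b t2 > 0], the map [t |-> b^-1 * ln (b * t * w)] is strictly
   increasing whatever the sign of [b]: this is how the Renyi divergence of
   order [a] depends on [sum_m p_m `^ a / (a - 1)]. *)
Lemma scaled_ln_mono {R : realType} {b w t1 t2 : R} :
  0 < w -> 0 < b * t1 -> 0 < b * t2 ->
  (t1 <= t2 -> b^-1 * ln (b * t1 * w) <= b^-1 * ln (b * t2 * w)) /\
  (t1 < t2 -> b^-1 * ln (b * t1 * w) < b^-1 * ln (b * t2 * w)).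
Proof.
move=> w_gt0 bt1_gt0 bt2_gt0.
have pos1 : b * t1 * w \is Num.pos by rewrite posrE mulr_gt0.
have pos2 : b * t2 * w \is Num.pos by rewrite posrE mulr_gt0.
have [b_lt0|b_gt0|b0] := ltgtP b 0; last by rewrite b0 mul0r ltxx in bt1_gt0.
- split.
    by rewrite ler_nM2l ?invr_lt0 // ler_ln // ler_pM2r // ler_nM2l.
  by rewrite ltr_nM2l ?invr_lt0 // ltr_ln // ltr_pM2r // ltr_nM2l.
- split.
    by rewrite ler_pM2l ?invr_gt0 // ler_ln // ler_pM2r // ler_pM2l.
  by rewrite ltr_pM2l ?invr_gt0 // ltr_ln // ltr_pM2r // ltr_pM2l.
Qed.

Lemma sum_powR_gt0 {R : realType} (n : nat) (Q : 'I_n -> R) (a : R) :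
  (forall m, 0 <= Q m) -> \sum_(m < n) Q m = 1 -> 0 < \sum_(m < n) Q m `^ a.
Proof.
move=> Q_ge0 Q_sum1.
rewrite lt_def sumr_ge0 ?andbT => [|m _]; last exact: powR_ge0.
apply/eqP => /(psumr_eq0P (fun m _ => powR_ge0 (Q m) a)) Qa0.
move: Q_sum1; rewrite big1 => [/esym/eqP|m _]; first by rewrite oner_eq0.
exact: (powR_eq0_eq0 (Qa0 m isT)).
Qed.

Lemma bigmax_ratio_le {R : realType} {n : nat} (Q : 'I_n -> R) {u c : R} :
  0 < u -> 0 <= c ->
  \big[Num.max/0]_(m < n) (Q m / u) <= c / u <-> forall m, Q m <= c.
Proof.
move=> u_gt0 c_ge0; have ui_gt0 : 0 < u^-1 by rewrite invr_gt0.
split=> [/bigmax_leP[_ le_cu] m|le_c]; first by rewrite -(ler_pM2r ui_gt0) le_cu.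
apply/bigmax_leP; split=> [|m _]; last by rewrite ler_pM2r.
by rewrite divr_ge0 // ltW.
Qed.

Lemma unique_minimizer {R : realType} (N K : nat) (D : R)
    (f : ('I_(N ^ K) -> R) -> R) (P0 : 'I_(N ^ K) -> R) :
  feasible N K D P0 ->
  (forall Q, feasible N K D Q ->
     f P0 <= f Q /\ ((exists m, Q m != P0 m) -> f P0 < f Q)) ->
  forall P, is_minimizer N K D f P <-> (forall m, P m = P0 m).
Proof.
move=> P0_feas P0_min P; split=> [[P_feas P_min] m|P_eq].
  apply/eqP; apply: contraT => P_neq.
  have := (P0_min P P_feas).2 (ex_intro _ m P_neq).
  by rewrite ltNge P_min.
have -> : P = P0 by apply: funext.
by split=> // Q Q_feas; case: (P0_min Q Q_feas).
Qed.

Section TianSunChenScheme.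
Variables (R : realType) (N K : nat) (D : R).
Hypotheses (N_ge2 : (2 <= N)%N) (K_ge2 : (2 <= K)%N).
Hypotheses (D_ge1 : 1 <= D) (D_le : D <= (Cconst R N K)^-1).

Lemma N_lt_NK : (N < N ^ K)%N.
Proof. by rewrite -[X in (X < _)%N]expn1 ltn_exp2l. Qed.

Definition pcheap : R := (1 - (N%:R - 1) * (D - 1)) / N%:R.
Definition pdear : R := (N%:R - 1) * (D - 1) / ((N ^ K)%:R - N%:R).

Lemma pstar_cheap (m : 'I_(N ^ K)) : (m < N)%N -> pstar N K D m = pcheap.
Proof. by rewrite /pstar => ->. Qed.

Lemma pstar_dear (m : 'I_(N ^ K)) : ~~ (m < N)%N -> pstar N K D m = pdear.
Proof. by rewrite /pstar => /negbTE->. Qed.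

Let N_gt0 : (0 : R) < N%:R.
Proof. by rewrite ltr0n (leq_trans _ N_ge2). Qed.

Let N1_gt0 : (0 : R) < N%:R - 1.
Proof. by rewrite subr_gt0 ltr1n. Qed.

Let NK_gt0 : (0 : R) < (N ^ K)%:R.
Proof. by rewrite ltr0n expn_gt0 (leq_trans _ N_ge2). Qed.

Let NK_N_gt0 : (0 : R) < (N ^ K)%:R - N%:R.
Proof. by rewrite subr_gt0 ltr_nat N_lt_NK. Qed.

(* Geometric series: [(N - 1) / C = N (1 - N^-K)]. *)
Lemma Cconst_geometric :
  (N%:R - 1) * (Cconst R N K)^-1 = N%:R * (1 - N%:R^-1 ^+ K).
Proof.
rewrite /Cconst invrK; under eq_bigr do rewrite -exprVn.
have NV : N%:R * N%:R^-1 = 1 :> R by rewrite mulfV // gt_eqF.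
have -> : N%:R - 1 = - (N%:R * (N%:R^-1 - 1)) :> R.
  by rewrite mulrBr NV mulr1 opprB.
by rewrite mulNr -mulrA -subrX1 -mulrN opprB.
Qed.

(* The constraint [D <= 1/C] says that [pcheap] is at least the uniform
   probability [N^-K]; in particular [pcheap > 0] and [pdear <= pcheap]. *)
Lemma pcheap_ge_unif : 1 <= (N ^ K)%:R * pcheap.
Proof.
have NKV : (N ^ K)%:R * N%:R^-1 ^+ K = 1 :> R.
  by rewrite natrX -exprMn mulfV ?expr1n // gt_eqF.
have : (N%:R - 1) * D <= (N%:R - 1) * (Cconst R N K)^-1.
  by apply: ler_wpM2l; first exact: ltW.
rewrite Cconst_geometric => le.
rewrite -[X in X <= _]NKV /pcheap ler_pM2l // ler_pdivlMr //; lra.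
Qed.

Lemma pcheap_gt0 : 0 < pcheap.
Proof.
by rewrite -(pmulr_rgt0 _ NK_gt0) (lt_le_trans ltr01 pcheap_ge_unif).
Qed.

Lemma pdear_ge0 : 0 <= pdear.
Proof.
apply: divr_ge0; last exact: ltW.
by apply: mulr_ge0; [exact: ltW | rewrite subr_ge0].
Qed.

Lemma pdear_le_pcheap : pdear <= pcheap.
Proof.
have massE : (N%:R - 1) * (D - 1) = 1 - N%:R * pcheap.
  by rewrite /pcheap; field; rewrite gt_eqF.
by rewrite /pdear massE ler_pdivrMr //; have := pcheap_ge_unif; lra.
Qed.

Lemma feasibleE (Q : 'I_(N ^ K) -> R) : feasible N K D Q <->
  (forall m, 0 <= Q m) /\
  \sum_(m < N ^ K | (m < N)%N) Q m = 1 - (N%:R - 1) * (D - 1) /\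
  \sum_(m < N ^ K | ~~ (m < N)%N) Q m = (N%:R - 1) * (D - 1).
Proof.
set S1 := \sum_(m < N ^ K | (m < N)%N) Q m.
set S2 := \sum_(m < N ^ K | ~~ (m < N)%N) Q m.
have sumE : \sum_(m < N ^ K) Q m = S1 + S2.
  by rewrite (bigID (fun m : 'I_(N ^ K) => (m < N)%N)).
have costE : \sum_(m < N ^ K) Q m * cost R N K m = S1 * (N%:R - 1) + S2 * N%:R.
  rewrite (bigID (fun m : 'I_(N ^ K) => (m < N)%N)) /= /S1 /S2 !mulr_suml.
  congr (_ + _); apply: eq_bigr => m; first by rewrite /cost => ->.
  by rewrite /cost => /negbTE->.
rewrite /feasible sumE costE; clearbody S1 S2.
have N1_neq0 : N%:R - 1 != 0 :> R by rewrite gt_eqF.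
split=> -[Q_ge0 [mass1 mass2]]; (split; first done).
  have D1 : D - 1 = S2 / (N%:R - 1) by rewrite -mass2 -[X in _ - X]mass1; field.
  by rewrite D1 -[X in X - _]mass1; split; field.
by rewrite mass1 mass2 subrK; split=> //; field.
Qed.

Lemma pstar_feasible : feasible N K D (pstar N K D).
Proof.
have le_NK := ltnW N_lt_NK.
apply/feasibleE; split=> [m|].
  by rewrite /pstar; case: ifP; rewrite ?pdear_ge0 ?ltW ?pcheap_gt0.
rewrite (eq_bigr (fun=> pcheap)) => [|m /pstar_cheap //].
rewrite [X in _ /\ X = _](eq_bigr (fun=> pdear)) => [|m /pstar_dear //].
rewrite sum_const_ltn ?sum_const_geq // /pcheap /pdear.
by split; field; rewrite gt_eqF.
Qed.

Lemma feasible_centered (Q : 'I_(N ^ K) -> R) : feasible N K D Q ->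
  \sum_(m < N ^ K | (m < N)%N) (Q m - pcheap) = 0 /\
  \sum_(m < N ^ K | ~~ (m < N)%N) (Q m - pdear) = 0.
Proof.
have le_NK := ltnW N_lt_NK.
move=> /feasibleE[_ [mass1 mass2]].
rewrite !sumrB mass1 mass2 sum_const_ltn ?sum_const_geq // /pcheap /pdear.
by split; field; rewrite gt_eqF.
Qed.

Lemma pstar_strict_min (phi : R -> R) :
  (forall c, 0 < c -> strict_support phi c) ->
  forall Q, feasible N K D Q ->
  \sum_(m < N ^ K) phi (pstar N K D m) <= \sum_(m < N ^ K) phi (Q m) /\
  ((exists m, Q m != pstar N K D m) ->
     \sum_(m < N ^ K) phi (pstar N K D m) < \sum_(m < N ^ K) phi (Q m)).
Proof.
move=> support Q Q_feas; have Q_ge0 m : 0 <= Q m by case: Q_feas.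
have [mean1 mean2] := feasible_centered Q Q_feas.
have [le1 lt1] :=
  block_jensen phi (ltW pcheap_gt0) (fun m _ => Q_ge0 m) mean1 (support _).
have [le2 lt2] :=
  block_jensen phi pdear_ge0 (fun m _ => Q_ge0 m) mean2 (support _).
have pstar_sum : \sum_(m < N ^ K) phi (pstar N K D m) =
    \sum_(m < N ^ K | (m < N)%N) phi pcheap +
    \sum_(m < N ^ K | ~~ (m < N)%N) phi pdear.
  rewrite (bigID (fun m : 'I_(N ^ K) => (m < N)%N)) /=.
  congr (_ + _); apply: eq_bigr => m; first by move/pstar_cheap->.
  by move/pstar_dear->.
rewrite pstar_sum.
rewrite (bigID (fun m : 'I_(N ^ K) => (m < N)%N) predT (fun m => phi (Q m))) /=.
split=> [|[m Qm_neq]]; first exact: lerD.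
case cheap: (m < N)%N.
  by apply: ltr_leD le2; apply: lt1; exists m; rewrite -?(pstar_cheap m cheap).
apply: ler_ltD le1 _; apply: lt2; exists m; first by rewrite cheap.
by rewrite -(pstar_dear m (negbT cheap)).
Qed.

(* For [a = 1] this is Jensen for [x ln (x / u)]; for [a != 1] the
   divergence is an increasing function of [sum_m Q m `^ a / (a - 1)]. *)
Lemma renyi_strict_min (a : R) : 0 < a -> forall Q, feasible N K D Q ->
  renyi a (pstar N K D) (unif R N K) <= renyi a Q (unif R N K) /\
  ((exists m, Q m != pstar N K D m) ->
     renyi a (pstar N K D) (unif R N K) < renyi a Q (unif R N K)).
Proof.
move=> a_gt0 Q Q_feas.
have u_gt0 : (0 : R) < ((N ^ K)%:R)^-1 by rewrite invr_gt0.
rewrite /renyi /unif; case: eqP => [_|/eqP a_neq1].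
  exact: pstar_strict_min _ (fun c => support_xlnx _ c u_gt0) Q Q_feas.
set w := _ `^ (1 - a); have w_gt0 : 0 < w := powR_gt0 (1 - a) u_gt0.
have powE (P : 'I_(N ^ K) -> R) : \sum_(m < N ^ K) P m `^ a * w =
    (a - 1) * (\sum_(m < N ^ K) P m `^ a / (a - 1)) * w.
  by rewrite -!mulr_suml; field; rewrite subr_eq0.
have pos P : feasible N K D P ->
    0 < (a - 1) * \sum_(m < N ^ K) P m `^ a / (a - 1).
  case=> P_ge0 [P_sum1 _]; rewrite -mulr_suml mulrCA mulfV ?mulr1 ?subr_eq0 //.
  exact: sum_powR_gt0.
have [le lt] :=
  pstar_strict_min _ (fun c => support_powR a c a_gt0 a_neq1) Q Q_feas.
have [mono smono] := scaled_ln_mono w_gt0 (pos _ pstar_feasible) (pos _ Q_feas).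
by rewrite !powE; split=> [|/lt]; [apply: mono | apply: smono].
Qed.

(* Some cheap option carries at least the mean mass [pcheap] of its block,
   so every feasible [Q] has [max_m Q m / u >= pcheap / u]. *)
Lemma feasible_max_ratio_ge (Q : 'I_(N ^ K) -> R) : feasible N K D Q ->
  pcheap / ((N ^ K)%:R)^-1 <=
  \big[Num.max/0]_(m < N ^ K) (Q m / ((N ^ K)%:R)^-1).
Proof.
move=> Q_feas; have [mean1 _] := feasible_centered Q Q_feas.
have NK_pos : (0 < N ^ K)%N by rewrite expn_gt0 (leq_trans _ N_ge2).
have cheap0 : exists m : 'I_(N ^ K), (m < N)%N.
  by exists (Ordinal NK_pos); rewrite /= (leq_trans _ N_ge2).
have [m _ le] := block_exists_ge_mean cheap0 mean1.
by apply: le_trans (le_bigmax _ _ m); rewrite ler_pM2r // invr_gt0 invr_gt0.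
Qed.

Lemma renyi_inf_minimizerE (P : 'I_(N ^ K) -> R) :
  is_minimizer N K D (fun Q => renyi_inf Q (unif R N K)) P <->
  feasible N K D P /\ (forall m, P m <= pcheap).
Proof.
have u_gt0 : (0 : R) < ((N ^ K)%:R)^-1 by rewrite invr_gt0.
have capped Q := bigmax_ratio_le Q u_gt0 (ltW pcheap_gt0).
have pos Q : feasible N K D Q ->
    \big[Num.max/0]_(m < N ^ K) (Q m / ((N ^ K)%:R)^-1) \is Num.pos.
  move=> Q_feas; rewrite posrE.
  apply: lt_le_trans (feasible_max_ratio_ge Q Q_feas).
  by rewrite divr_gt0 ?pcheap_gt0.
have pstar_le m : pstar N K D m <= pcheap.
  by rewrite /pstar; case: ifP; rewrite ?pdear_le_pcheap.
rewrite /is_minimizer /renyi_inf /unif; split=> [[P_feas P_min]|[P_feas P_le]].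
  have := P_min _ pstar_feasible.
  rewrite ler_ln ?(pos _ P_feas) ?(pos _ pstar_feasible) // => le.
  by split=> //; apply/capped; apply: le_trans le _; apply/capped.
split=> // Q Q_feas; rewrite ler_ln ?(pos _ P_feas) ?(pos _ Q_feas) //.
by apply: le_trans (feasible_max_ratio_ge Q Q_feas); apply/capped.
Qed.

(* Part (ii), second step: a feasible [P] bounded by [pcheap] equals [pcheap]
   on the cheap block (whose mean is [pcheap]); on the expensive block only
   the bounds and the total mass remain. *)
Lemma capped_feasibleE (P : 'I_(N ^ K) -> R) : feasible N K D P ->
  (forall m, P m <= pcheap) <->
  (forall m : 'I_(N ^ K), (m < N)%N -> P m = pcheap) /\
  (forall m : 'I_(N ^ K), (N <= m)%N -> 0 <= P m /\ P m <= pcheap) /\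
  \sum_(m < N ^ K | (N <= m)%N) P m = (N%:R - 1) * (D - 1).
Proof.
move=> P_feas; have [P_ge0 [_ mass2]] := (feasibleE P).1 P_feas.
have [mean1 _] := feasible_centered P P_feas.
split=> [P_le|[cheap [dear _]] m].
  split; first exact: block_eq_mean_of_le (fun m _ => P_le m) mean1.
  split=> [m _|]; first by split.
  by rewrite -mass2; apply: eq_bigl => m; rewrite leqNgt.
by case: (ltnP m N) => [/cheap->|/dear[]].
Qed.

End TianSunChenScheme.


Theorem lemma1 (R : realType) (N K : nat) (D : R) :
  (2 <= N)%N -> (2 <= K)%N ->
  1 <= D -> D <= (Cconst R N K)^-1 ->
  (forall alpha : R, 0 < alpha ->
     forall P : 'I_(N ^ K) -> R,
       is_minimizer N K D (fun Q => renyi alpha Q (unif R N K)) P <->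
       (forall m, P m = pstar N K D m)) /\
  (forall P : 'I_(N ^ K) -> R,
     is_minimizer N K D (fun Q => renyi_inf Q (unif R N K)) P <->
     feasible N K D P /\
     (forall m : 'I_(N ^ K), (m < N)%N -> P m = (1 - (N%:R - 1) * (D - 1)) / N%:R) /\
     (forall m : 'I_(N ^ K), (N <= m)%N ->
        0 <= P m /\ P m <= (1 - (N%:R - 1) * (D - 1)) / N%:R) /\
     \sum_(m < N ^ K | (N <= m)%N) P m = (N%:R - 1) * (D - 1)).
Proof.
move=> N_ge2 K_ge2 D_ge1 D_le; split.
  move=> a a_gt0; apply: unique_minimizer; first exact: pstar_feasible.
  exact: renyi_strict_min.
move=> P.
apply: iff_trans (renyi_inf_minimizerE _ _ _ _ N_ge2 K_ge2 D_ge1 D_le P) _.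
split=> -[P_feas capped]; split=> //.
  by apply/(capped_feasibleE _ _ _ _ N_ge2 K_ge2 P P_feas).
by apply/(capped_feasibleE _ _ _ _ N_ge2 K_ge2 P P_feas).
Qed.
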